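(* Let $\alpha\in(\frac12,\frac23)$ and $M>0$. Then for every $\varphi\in H^1(\mathbb R^3)$ with $\|\varphi\|_{L^2(\mathbb R^3)}^2=M$, \[ \|\varphi\|_{L^{2\alpha+2}(\mathbb R^3)}^{2\alpha+2}\le \mathrm C_{1/2}^{2-2\alpha}\,\mathrm C_{GN}(1)^{2\alpha-1}\,M^{\alpha-\frac12}\,\|\nabla\varphi\|_{L^2(\mathbb R^3)}^{4\alpha-1}\,D[\varphi]^{1-\alpha}. \]
   Context: $D[u]:=\iint_{\mathbb R^3\times\mathbb R^3}\frac{|u(x)|^2|u(x')|^2}{|x-x'|}\,dx\,dx'$. $\mathrm C_{1/2}$ is the optimal constant in $\|u\|_{L^3}^3\le\mathrm C_{1/2}D[u]^{1/2}\|\nabla u\|_{L^2}$ for all $u\in H^1(\mathbb R^3)$, and $\mathrm C_{GN}(1)$ is the optimal constant in $\|u\|_{L^4}^4\le\mathrm C_{GN}(1)\|\nabla u\|_{L^2}^3\|u\|_{L^2}$ for all $u\in H^1(\mathbb R^3)$. *)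

From HB Require Import structures.
From mathcomp Require Import all_boot all_order all_algebra.
From mathcomp Require Import all_classical all_reals all_analysis.
Set Implicit Arguments. Unset Strict Implicit. Unset Printing Implicit Defensive.
Import Order.TTheory GRing.Theory Num.Theory.
Import numFieldNormedType.Exports.
Local Open Scope classical_set_scope.
Local Open Scope ring_scope.

Section Defs.
Variable R : realType.

Definition R3 := ((R * R) * R)%type.

Definition leb3 := ((@lebesgue_measure R \x @lebesgue_measure R) \x @lebesgue_measure R)%E.

Definition e3 (i : 'I_3) : R3 :=
  if val i == 0%N then ((1, 0), 0) else if val i == 1%N then ((0, 1), 0) else ((0, 0), 1).

Definition enorm3 (x : R3) : R := Num.sqrt (x.1.1 ^+ 2 + x.1.2 ^+ 2 + x.2 ^+ 2).

Definition pd (i : 'I_3) (f : R3 -> R) : R3 -> R := fun x => 'D_(e3 i) f x.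

Definition pds (ds : seq 'I_3) (f : R3 -> R) : R3 -> R := foldr pd f ds.

Definition test_fun (phi : R3 -> R) : Prop :=
  (forall (ds : seq 'I_3), continuous (pds ds phi) /\
     forall (i : 'I_3) (x : R3), derivable (pds ds phi) x (e3 i)) /\
  compact (closure [set x | phi x != 0]).

Definition L2 (f : R3 -> R) : Prop :=
  measurable_fun setT f /\ (\int[leb3]_x ((f x) ^+ 2)%:E < +oo)%E.

Definition weak_partial (i : 'I_3) (u g : R3 -> R) : Prop :=
  forall phi, test_fun phi ->
    (\int[leb3]_x (u x * pd i phi x)%:E = - \int[leb3]_x (g x * phi x)%:E)%E.

Definition H1r (u : R3 -> R) (gu : 'I_3 -> R3 -> R) : Prop :=
  L2 u /\ forall i, L2 (gu i) /\ weak_partial i u (gu i).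

(* complex-valued H^1 function phi = u + i v with weak gradient gu + i gv *)
Definition H1 (u v : R3 -> R) (gu gv : 'I_3 -> R3 -> R) : Prop :=
  H1r u gu /\ H1r v gv.

Definition modsq (u v : R3 -> R) (x : R3) : R := u x ^+ 2 + v x ^+ 2.

Definition Lp_pow (p : R) (u v : R3 -> R) : \bar R :=
  (\int[leb3]_x ((modsq u v x) `^ (p / 2))%:E)%E.

Definition L2sq (u v : R3 -> R) : \bar R := (\int[leb3]_x (modsq u v x)%:E)%E.

Definition grad_norm (gu gv : 'I_3 -> R3 -> R) : \bar R :=
  ((\int[leb3]_x (\sum_(i < 3) (gu i x ^+ 2 + gv i x ^+ 2))%:E) `^ (2^-1))%E.

Definition Dcoul (u v : R3 -> R) : \bar R :=
  (\int[(leb3 \x leb3)%E]_xy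
     (modsq u v xy.1 * modsq u v xy.2 / enorm3 (xy.1 - xy.2))%:E)%E.

Definition C_half_admissible (C : R) : Prop :=
  forall u v gu gv, H1 u v gu gv ->
    (Lp_pow 3 u v <= C%:E * (Dcoul u v) `^ (2^-1) * grad_norm gu gv)%E.

Definition is_C_half (C : R) : Prop :=
  C_half_admissible C /\ forall C', C_half_admissible C' -> C <= C'.

Definition C_GN1_admissible (C : R) : Prop :=
  forall u v gu gv, H1 u v gu gv ->
    (Lp_pow 4 u v <= C%:E * (grad_norm gu gv) `^ 3 * (L2sq u v) `^ (2^-1))%E.

Definition is_C_GN1 (C : R) : Prop :=
  C_GN1_admissible C /\ forall C', C_GN1_admissible C' -> C <= C'.

End Defs.

From HB Require Import structures.
From mathcomp Require Import all_boot all_order all_algebra.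
From mathcomp Require Import all_classical all_reals all_analysis.
From mathcomp Require Import lra measurable_realfun.
Import Order.TTheory GRing.Theory Num.Theory.
Import numFieldNormedType.Exports.
Local Open Scope ring_scope.

(* Write p = 2α + 2 as the convex combination θ·3 + (1 - θ)·4 with
   θ = 2 - 2α.  Hölder's inequality with exponents 1/θ and 1/(1 - θ) applied
   to |φ|^(3θ) · |φ|^(4(1-θ)) bounds ∫|φ|^p by (∫|φ|^3)^θ (∫|φ|^4)^(1-θ);
   raising the two defining inequalities of C_{1/2} and C_GN(1) to the powers
   θ and 1 - θ and collecting the exponents gives the claim. *)

Section IntegralPowers.
Context d (T : measurableType d) (R : realType) (mu : {measure set T -> \bar R}).

Lemma Lnorm_powR (f : T -> R) (c k : R) :
  (forall x, 0 <= f x) -> 0 < c ->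
  Lnorm mu (c^-1)%:E (EFin \o (fun x => f x `^ (c * k))) =
  ((\int[mu]_x (f x `^ k)%:E) `^ c)%E.
Proof.
move=> f0 c0; rewrite -[LHS](poweRe1 (Lnorm_ge0 _ _ _)).
rewrite -[X in (_ `^ X)%E](mulVf (lt0r_neq0 c0)) poweRrM.
rewrite poweR_Lnorm ?invr_neq0 ?gt_eqF //.
congr (_ `^ _)%E; apply: eq_integral => x _ /=.
by rewrite ger0_norm ?powR_ge0 // -powRrM mulrC mulrA mulVf ?mul1r ?gt_eqF.
Qed.

Lemma integral_powR_interpolation (f : T -> R) (a b r s : R) :
  measurable_fun setT f -> (forall x, 0 <= f x) ->
  0 < a -> 0 < b -> a + b = 1 -> 0 < r -> 0 < s ->
  (\int[mu]_x (f x `^ (a * r + b * s))%:E <=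
   (\int[mu]_x (f x `^ r)%:E) `^ a * (\int[mu]_x (f x `^ s)%:E) `^ b)%E.
Proof.
move=> mf f0 a0 b0 ab1 r0 s0.
have mfpow e : measurable_fun setT (fun x => f x `^ e).
  exact: measurableT_comp (measurable_powR _) mf.
have := @hoelder _ _ _ mu _ _ a^-1 b^-1 (mfpow (a * r)) (mfpow (b * s)).
rewrite !invr_gt0 !invrK => /(_ a0 b0 ab1).
rewrite Lnorm1 !Lnorm_powR //; apply: le_trans; rewrite le_eqVlt; apply/predU1l.
apply: eq_integral => x _ /=.
rewrite ger0_norm ?mulr_ge0 ?powR_ge0 // powRD //.
by rewrite gt_eqF ?implybT // addr_gt0 // mulr_gt0.
Qed.

End IntegralPowers.

Section ExtendedPowers.
Context {R : realType}.
Local Open Scope ereal_scope.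

(* No sign condition on c: a nonpositive c forces x = 0, and c `^ a >= 0. *)
Lemma poweR_le_scale {x y : \bar R} {c a : R} :
  0 <= x -> 0 <= y -> (0 < a)%R -> x <= c%:E * y ->
  x `^ a <= (c `^ a)%:E * y `^ a.
Proof.
move=> x0 y0 a0 xle.
have rhs0 : 0 <= (c `^ a)%:E * y `^ a.
  by rewrite mule_ge0 ?poweR_ge0 ?lee_fin ?powR_ge0.
have [c0|] := ltP 0%R c; last first.
  move=> c_le0; have x_eq0 : x = 0.
    apply/eqP; rewrite eq_le x0 andbT (le_trans xle) //.
    by rewrite mule_le0_ge0 ?lee_fin.
  by rewrite x_eq0 poweR0r ?gt_eqF.
have inR0 (z : \bar R) : 0 <= z -> z \in `[0%E, +oo%E].
  by move=> z0; rewrite in_itv /= z0 leey.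
apply: le_trans (gt0_ler_poweR (ltW a0) (inR0 _ x0) _ xle) _.
  by rewrite inR0 // mule_ge0 // lee_fin ltW.
by rewrite poweRM ?lee_fin ?(ltW c0) // poweR_EFin.
Qed.

Lemma le_poweR_mul_Coulomb_GN {X Y G D : \bar R} {C1 C2 M a b : R} :
  0 <= X -> 0 <= Y -> 0 <= G -> (0 < a)%R -> (0 < b)%R ->
  X <= C1%:E * D `^ 2^-1 * G -> Y <= C2%:E * G `^ 3 * M%:E `^ 2^-1 ->
  X `^ a * Y `^ b <= (C1 `^ a)%:E * (C2 `^ b)%:E * (M `^ (2^-1 * b))%:E
                      * G `^ (a + 3 * b) * D `^ (2^-1 * a).
Proof.
move=> X0 Y0 G0 a0 b0 XC1 YC2; rewrite -muleA in XC1; rewrite -muleA in YC2.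
have XaC1 := poweR_le_scale X0 (mule_ge0 (poweR_ge0 _ _) G0) a0 XC1.
have YbC2 := poweR_le_scale Y0 (mule_ge0 (poweR_ge0 _ _) (poweR_ge0 _ _)) b0 YC2.
apply: le_trans (lee_pmul (poweR_ge0 _ _) (poweR_ge0 _ _) XaC1 YbC2) _.
rewrite !poweRM ?poweR_ge0 // -!poweRrM poweR_EFin.
rewrite (poweRD (add_neq0_poweRD_def _ _)); last first.
  by rewrite gt_eqF ?addr_gt0 ?mulr_gt0.
by rewrite [leLHS](AC ((1*2)*(1*2)) (1*4*6*(3*5)*2)).
Qed.

End ExtendedPowers.

Section CoulombInterpolation.
Context {R : realType}.
Local Open Scope ereal_scope.

Lemma modsq_ge0 (u v : R3 R -> R) x : (0 <= modsq u v x)%R.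
Proof. by rewrite /modsq addr_ge0 // sqr_ge0. Qed.

Lemma measurable_modsq (u v : R3 R -> R) gu gv :
  H1 u v gu gv -> measurable_fun setT (modsq u v).
Proof.
move=> [[[mu _] _] [[mv _] _]].
by apply: measurable_funD; apply: measurable_funX.
Qed.

Lemma Lp_pow_ge0 (p : R) (u v : R3 R -> R) : 0 <= Lp_pow p u v.
Proof. by apply: integral_ge0 => x _; rewrite lee_fin powR_ge0. Qed.

Lemma Lp_pow_interpolation {a b} (r s : R) {u v gu gv} :
  H1 u v gu gv -> (0 < a)%R -> (0 < b)%R -> (a + b = 1)%R ->
  (0 < r)%R -> (0 < s)%R ->
  Lp_pow (a * r + b * s) u v <= Lp_pow r u v `^ a * Lp_pow s u v `^ b.
Proof.
move=> uvH1 a0 b0 ab1 r0 s0; rewrite /Lp_pow mulrDl -!mulrA.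
apply: integral_powR_interpolation; rewrite ?divr_gt0 //.
- exact: measurable_modsq uvH1.
- exact: modsq_ge0.
Qed.

End CoulombInterpolation.

Theorem corollary2p7 (R : realType) (alpha M C1 C2 : R) :
  2^-1 < alpha -> alpha < 2 / 3 -> 0 < M ->
  is_C_half C1 -> is_C_GN1 C2 ->
  forall (u v : R3 R -> R) (gu gv : 'I_3 -> R3 R -> R),
    H1 u v gu gv -> L2sq u v = M%:E ->
    (Lp_pow (2 * alpha + 2) u v <=
       (C1 `^ (2 - 2 * alpha))%:E * (C2 `^ (2 * alpha - 1))%:E
       * (M `^ (alpha - 2^-1))%:E
       * (grad_norm gu gv) `^ (4 * alpha - 1)
       * (Dcoul u v) `^ (1 - alpha))%E.
Proof.
move=> alpha_gt alpha_lt _ [C1_adm _] [C2_adm _] u v gu gv uvH1 uvM.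
have a0 : 0 < 2 - 2 * alpha by lra.
have b0 : 0 < 2 * alpha - 1 by lra.
have -> : 2 * alpha + 2 = (2 - 2 * alpha) * 3 + (2 * alpha - 1) * 4 by lra.
have ab1 : (2 - 2 * alpha) + (2 * alpha - 1) = 1 by lra.
have := Lp_pow_interpolation 3 4 uvH1 a0 b0 ab1 (ltr0n _ 3) (ltr0n _ 4).
move=> /le_trans; apply.
have Dbound := C1_adm _ _ _ _ uvH1.
have GNbound := C2_adm _ _ _ _ uvH1; rewrite uvM in GNbound.
have := le_poweR_mul_Coulomb_GN (Lp_pow_ge0 _ _ _) (Lp_pow_ge0 _ _ _)
  (poweR_ge0 _ _) a0 b0 Dbound GNbound.
have -> : 2^-1 * (2 * alpha - 1) = alpha - 2^-1 by lra.
have -> : 2 - 2 * alpha + 3 * (2 * alpha - 1) = 4 * alpha - 1 by lra.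
by have -> : 2^-1 * (2 - 2 * alpha) = 1 - alpha by lra.
Qed.
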